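(* Let $(\mathcal{M},\mathcal{L})$ be a regular symplectic pair with $\mathcal{M},\mathcal{L}\in\mathbb{C}^{2n\times2n}$ and $\mathrm{ind}_\infty(\mathcal{M},\mathcal{L})\le1$. Let $\hat n\le n$, $\ell=n-\hat n$, $U_0,U_\infty\in\mathbb{C}^{2n\times\ell}$, $U_1\in\mathbb{C}^{2n\times2\hat n}$, $\mathbf{U}=[U_1\,|\,U_0,U_\infty]$ and a symplectic $\widehat{\mathcal{S}}\in\mathbb{C}^{2\hat n\times2\hat n}$ satisfy $\mathbf{U}^H\mathcal{J}_n\mathbf{U}=\mathcal{J}_{\hat n}\oplus\mathcal{J}_\ell$, $\mathcal{M}U_0=0$, $\mathcal{L}U_\infty=0$, $\mathcal{M}U_1=\mathcal{L}U_1\widehat{\mathcal{S}}$. Let $\widehat{\mathcal{H}}\in\mathbb{C}^{2\hat n\times2\hat n}$ be a Hamiltonian matrix with $e^{\widehat{\mathcal{H}}}=\widehat{\mathcal{S}}$. Then the matrix $$\mathcal{H}=\mathbf{U}\begin{bmatrix}\widehat{\mathcal{H}}&0\\0&0_{2\ell}\end{bmatrix}(\mathcal{J}_{\hat n}\oplus\mathcal{J}_\ell)^H\mathbf{U}^H\mathcal{J}_n$$ is Hamiltonian.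
   Context: $\mathcal{J}_m=\begin{bmatrix}0&I_m\\-I_m&0\end{bmatrix}$. A matrix $\mathcal{H}\in\mathbb{C}^{2m\times2m}$ is Hamiltonian if $\mathcal{H}\mathcal{J}_m=(\mathcal{H}\mathcal{J}_m)^H$; $\mathcal{S}$ is symplectic if $\mathcal{S}\mathcal{J}_m\mathcal{S}^H=\mathcal{J}_m$. A pair $(\mathcal{M},\mathcal{L})$ is symplectic if $\mathcal{M}\mathcal{J}_n\mathcal{M}^H=\mathcal{L}\mathcal{J}_n\mathcal{L}^H$, regular if $\det(\mathcal{M}-\lambda\mathcal{L})\ne0$ for some $\lambda$. $\mathrm{ind}_\infty(A,B)$ is the nilpotency index of the nilpotent block $N$ in the Kronecker canonical form $PAQ=\mathrm{diag}(J,I)$, $PBQ=\mathrm{diag}(I,N)$ of a regular pair, and is $0$ if $B$ is invertible. *)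

From HB Require Import structures.
From mathcomp Require Import all_boot all_order all_algebra.
From mathcomp Require Import complex reals.
Set Implicit Arguments. Unset Strict Implicit. Unset Printing Implicit Defensive.
Import Order.TTheory GRing.Theory Num.Theory.
Local Open Scope ring_scope.

Section Defs.
Context {R : realType}.
Local Notation C := (complex R).

Definition ctr m n (A : 'M[C]_(m, n)) : 'M[C]_(n, m) := (map_mx (@conjc R) A)^T.

Definition Jm (m : nat) : 'M[C]_(m + m) :=
  block_mx 0 1%:M (- 1%:M) 0.

Definition dsum p q (A : 'M[C]_p) (B : 'M[C]_q) : 'M[C]_(p + q) :=
  block_mx A 0 0 B.

Definition hamiltonian m (H : 'M[C]_(m + m)) : Prop :=
  H *m Jm m = ctr (H *m Jm m).

Definition symplectic m (S : 'M[C]_(m + m)) : Prop :=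
  S *m Jm m *m ctr S = Jm m.

Definition symplectic_pair n (M L : 'M[C]_(n + n)) : Prop :=
  M *m Jm n *m ctr M = L *m Jm n *m ctr L.

Definition regular_pair m (M L : 'M[C]_m) : Prop :=
  exists lambda : C, \det (M - lambda *: L) != 0.

(* ind_oo(A, B) <= k : in the Kronecker (Weierstrass) canonical form
   P A Q = diag(J, I), P B Q = diag(I, N) of the regular pair (A, B), the
   nilpotent block N has nilpotency index <= k, i.e. N^k = 0.
   (The index does not depend on the chosen decomposition; if the block N
   is empty, i.e. B is invertible, the index is 0.) *)
Definition ind_infty_le m (A B : 'M[C]_m) (k : nat) : Prop :=
  exists r s (e : (r + s = m)%N) (P Q : 'M[C]_m) (J : 'M[C]_r) (N : 'M[C]_s),
    [/\ P \in unitmx, Q \in unitmx,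
        P *m A *m Q = castmx (e, e) (block_mx J 0 0 1%:M),
        P *m B *m Q = castmx (e, e) (block_mx 1%:M 0 0 N) &
        (exists j, N ^+ j = 0) /\ N ^+ k = 0].

Definition mexp_partial m (A : 'M[C]_m) (N : nat) : 'M[C]_m :=
  \sum_(k < N) (k`!%:R)^-1 *: A ^+ k.

Definition is_mexp m (A E : 'M[C]_m) : Prop :=
  forall i j (eps : R), 0 < eps ->
    exists N0 : nat, forall N : nat, (N0 <= N)%N ->
      ComplexField.Normc.normc (mexp_partial A N i j - E i j) < eps.

End Defs.

(* With [Y := diag(Hh, 0) (J_nh (+) J_l)^H], which is Hermitian because [Hh] is
   Hamiltonian, and [J_n J_n = -1], one gets [H J_n = - U Y U^H]: a congruence
   of a Hermitian matrix, hence Hermitian. *)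
From HB Require Import structures.
From mathcomp Require Import all_boot all_order all_algebra.
From mathcomp Require Import complex reals.
Import Order.TTheory GRing.Theory Num.Theory.
Local Open Scope ring_scope.

Section HermitianCongruence.
Set Implicit Arguments.
Unset Strict Implicit.
Context {R : realType}.
Local Notation C := (complex R).

Definition hermitian m (A : 'M[C]_m) : Prop := ctr A = A.

Lemma ctrM m n p (A : 'M[C]_(m, n)) (B : 'M[C]_(n, p)) :
  ctr (A *m B) = ctr B *m ctr A.
Proof. by rewrite /ctr map_mxM trmx_mul. Qed.

Lemma ctrK m n (A : 'M[C]_(m, n)) : ctr (ctr A) = A.
Proof. by apply/matrixP=> i j; rewrite /ctr !mxE conjcK. Qed.

Lemma ctrN m n (A : 'M[C]_(m, n)) : ctr (- A) = - ctr A.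
Proof. by rewrite /ctr map_mxN linearN. Qed.

Lemma ctr0 m n : ctr (0 : 'M[C]_(m, n)) = 0.
Proof. by rewrite /ctr map_mx0 trmx0. Qed.

Lemma ctr1 m : ctr (1%:M : 'M[C]_m) = 1%:M.
Proof. by rewrite /ctr map_scalar_mx rmorph1 tr_scalar_mx. Qed.

Lemma ctr_block m1 m2 n1 n2 (A : 'M[C]_(m1, n1)) (B : 'M[C]_(m1, n2))
    (D : 'M[C]_(m2, n1)) (E : 'M[C]_(m2, n2)) :
  ctr (block_mx A B D E) = block_mx (ctr A) (ctr D) (ctr B) (ctr E).
Proof. by rewrite /ctr map_block_mx tr_block_mx. Qed.

Lemma ctr_dsum p q (A : 'M[C]_p) (B : 'M[C]_q) :
  ctr (dsum A B) = dsum (ctr A) (ctr B).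
Proof. by rewrite /dsum ctr_block !ctr0. Qed.

Lemma mul_dsum p q (A A' : 'M[C]_p) (B B' : 'M[C]_q) :
  dsum A B *m dsum A' B' = dsum (A *m A') (B *m B').
Proof. by rewrite /dsum mulmx_block !mulmx0 !mul0mx !addr0 !add0r. Qed.

Lemma ctr_Jm m : ctr (Jm m : 'M[C]_(m + m)) = - Jm m.
Proof. by rewrite /Jm ctr_block !ctr0 ctrN ctr1 opp_block_mx !oppr0 opprK. Qed.

Lemma mul_Jm_Jm m : (Jm m : 'M[C]_(m + m)) *m Jm m = - 1%:M.
Proof.
rewrite /Jm mulmx_block !mulmx0 !mul0mx !mulmxN !mul1mx !addr0 !add0r.
by rewrite (scalar_mx_block m m 1) opp_block_mx !oppr0 mulmx1.
Qed.

Lemma hermitianN m (A : 'M[C]_m) : hermitian A -> hermitian (- A).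
Proof. by rewrite /hermitian ctrN => ->. Qed.

Lemma hermitian0 m : hermitian (0 : 'M[C]_m).
Proof. exact: ctr0. Qed.

Lemma hermitian_dsum p q (A : 'M[C]_p) (B : 'M[C]_q) :
  hermitian A -> hermitian B -> hermitian (dsum A B).
Proof. by rewrite /hermitian ctr_dsum => -> ->. Qed.

Lemma hermitian_congr m n (U : 'M[C]_(m, n)) (Y : 'M[C]_n) :
  hermitian Y -> hermitian (U *m Y *m ctr U).
Proof. by rewrite /hermitian !ctrM ctrK mulmxA => ->. Qed.

Lemma hamiltonian_mul_ctrJ_hermitian m (H : 'M[C]_(m + m)) :
  hamiltonian H -> hermitian (H *m ctr (Jm m)).
Proof. by move=> hH; rewrite ctr_Jm mulmxN; apply: hermitianN. Qed.

Lemma hamiltonian_hermitian_congr m k (U : 'M[C]_(m + m, k)) (Y : 'M[C]_k) :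
  hermitian Y -> hamiltonian (U *m Y *m ctr U *m Jm m).
Proof.
move=> hY; rewrite /hamiltonian -mulmxA mul_Jm_Jm mulmxN mulmx1.
by apply/esym/hermitianN/hermitian_congr.
Qed.

End HermitianCongruence.

Theorem theorem2p4 (R : realType) (n nh : nat)
  (M L : 'M[complex R]_(n + n))
  (U1 : 'M[complex R]_(n + n, nh + nh))
  (U0 Uinf : 'M[complex R]_(n + n, n - nh))
  (Sh Hh : 'M[complex R]_(nh + nh)) :
  regular_pair M L ->
  symplectic_pair M L ->
  ind_infty_le M L 1 ->
  (nh <= n)%N ->
  symplectic Sh ->
  let U := row_mx U1 (row_mx U0 Uinf) in
  ctr U *m Jm n *m U = dsum (Jm nh) (Jm (n - nh)) ->
  M *m U0 = 0 ->
  L *m Uinf = 0 ->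
  M *m U1 = L *m U1 *m Sh ->
  hamiltonian Hh ->
  is_mexp Hh Sh ->
  hamiltonian
    (U *m dsum Hh (0 : 'M[complex R]_((n - nh) + (n - nh)))
       *m ctr (dsum (Jm nh) (Jm (n - nh))) *m ctr U *m Jm n).
Proof.
move=> _ _ _ _ _ U _ _ _ _ hHh _.
rewrite -(mulmxA U); apply: hamiltonian_hermitian_congr.
rewrite ctr_dsum mul_dsum mul0mx.
apply: hermitian_dsum (hermitian0 _).
exact: hamiltonian_mul_ctrJ_hermitian.
Qed.
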